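(* If an adversary $\mathcal{A}$ is knot opaque, then there is no deterministic algorithm that solves the Knot Identification Problem on every computation of $\mathcal{A}$.
   Context: A network consists of finitely many processes with unique identifiers. A state is a set of directed links between processes; a computation $\sigma=s_1,s_2,\dots$ is an infinite sequence of states; an adversary is a set of allowed computations. Causal precedence among events (local steps of processes and occurrences of links in states; a link's presence in each state is a separate event) is the smallest transitive relation such that $e_1$ precedes $e_2$ if both occur at the same process with $e_1$ earlier, or if there is a link from $p_1$ to $p_2$ with $e_1$ at $p_1$ before the link and $e_2$ at $p_2$ after it. The local observation graph $LG(p,\sigma,i)$ is the graph of all links (with endpoints) causally preceding the events at $p$ in state $s_i$. Two computations $\sigma_1,\sigma_2$ are observation graph identical for $p$ up to $s_i$ if $LG(p,\sigma_1,i)=LG(p,\sigma_2,i)$. Algorithms are deterministic: if $\sigma_1,\sigma_2$ are observation graph identical for $p$ up to $s_i$, all outputs of $p$ up to $s_i$ coincide in both. A knot of a directed graph is a set of at least two processes inducing a strongly connected subgraph with no incoming links from outside. Process $p$ observes knot $K$ in $\sigma$ if $K$ is a knot contained in $LG(p,\sigma,i)$ for some $i$; $K$ is globally observable if every process observes it. A process may output only a knot it has observed. An adversary $\mathcal{A}$ is knot opaque if there exist a process $p$ and a computation $\sigma_1\in\mathcal{A}$ such that for every state $s_i$ of $\sigma_1$ and every knot $K$ observed by $p$ in states up to $s_i$, there is a computation $\sigma_2\in\mathcal{A}$ observation graph identical to $\sigma_1$ for $p$ up to $s_i$ in which $K$ is not globally observable. Knot Identification Problem: each process outputs a set of processes forming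 a knot in the computation, such that (KI Agreement) if one process outputs $K$ then every process's output is $K$, and (KI Termination) every process outputs a knot. *)

From mathcomp Require Import all_boot.
From Stdlib Require Import Relations.Relation_Operators.
Set Implicit Arguments. Unset Strict Implicit. Unset Printing Implicit Defensive.

Section Network.
Variable P : finType.   (* finitely many processes, identified by their ids *)

(* A state is a set of directed links (q, r) from q to r. *)
Definition state := {set P * P}.
Definition computation := nat -> state.
Definition adversary := computation -> Prop.

(* Events: local step of process p in state s_i, or the occurrence of the
   link (q, r) in state s_j. *)
Inductive event :=
| PEv (p : P) (i : nat)
| LEv (q r : P) (j : nat).

Inductive cstep (s : computation) : event -> event -> Prop :=
| cs_local p i i' : i < i' -> cstep s (PEv p i) (PEv p i')
| cs_send q r i j : (q, r) \in s j -> i < j -> cstep s (PEv q i) (LEv q r j)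
| cs_recv q r j i : (q, r) \in s j -> j <= i -> cstep s (LEv q r j) (PEv r i).

Definition causal (s : computation) : event -> event -> Prop :=
  clos_trans event (cstep s).

Definition LG (p : P) (s : computation) (i : nat) : P -> P -> Prop :=
  fun q r => exists j, (q, r) \in s j /\ causal s (LEv q r j) (PEv p i).

Definition obs_identical (p : P) (s1 s2 : computation) (i : nat) : Prop :=
  forall q r, LG p s1 i q r <-> LG p s2 i q r.

Definition knot (E : P -> P -> Prop) (K : {set P}) : Prop :=
  [/\ 2 <= #|K|,
      (forall x y, x \in K -> y \in K ->
         clos_refl_trans P (fun a b => [/\ a \in K, b \in K & E a b]) x y)
    & (forall x y, E x y -> y \in K -> x \in K)].

Definition observes_upto (p : P) (s : computation) (i : nat) (K : {set P}) :=
  exists i', i' <= i /\ knot (LG p s i') K.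

Definition observes (p : P) (s : computation) (K : {set P}) :=
  exists i, knot (LG p s i) K.

Definition globally_observable (s : computation) (K : {set P}) :=
  forall q, observes q s K.

Definition knot_opaque (A : adversary) : Prop :=
  exists p (s1 : computation), A s1 /\
    forall i (K : {set P}), observes_upto p s1 i K ->
      exists s2, A s2 /\ obs_identical p s1 s2 i /\ ~ globally_observable s2 K.

(* An algorithm is described by its output behaviour:
   alg p s i = Some K  iff  process p outputs K in state s_i of s. *)
Definition algorithm := P -> computation -> nat -> option {set P}.

Definition outputs (alg : algorithm) (p : P) (s : computation) (K : {set P}) :=
  exists i, alg p s i = Some K.

Definition deterministic (alg : algorithm) : Prop :=
  forall p s1 s2 i, obs_identical p s1 s2 i ->
    forall i', i' <= i -> alg p s1 i' = alg p s2 i'.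

Definition outputs_observed (alg : algorithm) : Prop :=
  forall p s i K, alg p s i = Some K -> observes_upto p s i K.

Definition KI_agreement (alg : algorithm) (s : computation) : Prop :=
  forall p K, outputs alg p s K -> forall q K', outputs alg q s K' -> K' = K.

Definition KI_termination (alg : algorithm) (s : computation) : Prop :=
  forall p, exists K, outputs alg p s K /\ observes p s K.

Definition solves_KI (A : adversary) (alg : algorithm) : Prop :=
  forall s, A s -> KI_agreement alg s /\ KI_termination alg s.

End Network.

From mathcomp Require Import all_boot.

Set Implicit Arguments.
Unset Strict Implicit.
Unset Printing Implicit Defensive.

(* Let p and s1 witness opacity. On s1 the algorithm makes p output some knot
   K in a state s_i, and p has observed K by then. Opacity yields a computation
   s2 that p cannot tell apart from s1 up to s_i, in which K is not globally
   observable. By determinism p outputs K in s2 as well; agreement and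
   termination on s2 then force every process to observe K in s2. *)

Section KnotIdentification.

Variables (P : finType) (alg : algorithm P).

Lemma deterministic_output (p : P) (s1 s2 : computation P) i (K : {set P}) :
  deterministic alg -> obs_identical p s1 s2 i ->
  alg p s1 i = Some K -> alg p s2 i = Some K.
Proof. by move=> det id12 <-; rewrite (det _ _ _ _ id12 i (leqnn i)). Qed.

Lemma output_globally_observable (s : computation P) (p : P) (K : {set P}) :
  KI_agreement alg s -> KI_termination alg s ->
  outputs alg p s K -> globally_observable s K.
Proof.
move=> agree term outK q.
have [K' [outK' obsK']] := term q.
by rewrite -(agree p K outK q K' outK').
Qed.

End KnotIdentification.

Theorem lemma1 (P : finType) (A : adversary P) :
  knot_opaque A ->
  ~ (exists alg : algorithm P,
        deterministic alg /\ outputs_observed alg /\ solves_KI A alg).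
Proof.
move=> [p [s1 [As1 opaque]]] [alg [det [observed solves]]].
have [K [[i outK] _]] := (solves s1 As1).2 p.
have [s2 [As2 [id12 not_global]]] := opaque i K (observed _ _ _ _ outK).
have [agree term] := solves s2 As2.
have outK2 : outputs alg p s2 K by exists i; apply: deterministic_output outK.
exact: not_global (output_globally_observable agree term outK2).
Qed.
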